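(* Let $q$ be a prime power, $k\ge 1$ and $t\ge 0$ integers. Suppose there exists an $[n,k]_q$ MWS code with $n<q^t$. Then there exists an $[N,k+1]_q$ MWS code with $N<q^{t+k+1}$.
   Context: An $[n,k]_q$ code is a $k$-dimensional subspace of $\mathbb{F}_q^n$ (non-degenerate, i.e. no coordinate identically zero on the code, when $k\ge2$). It is MWS if the set of its non-zero Hamming weights has cardinality $\frac{q^k-1}{q-1}$. *)

From HB Require Import structures.
From mathcomp Require Import all_boot all_order all_algebra all_field.
Set Implicit Arguments. Unset Strict Implicit. Unset Printing Implicit Defensive.
Import GRing.Theory.
Local Open Scope ring_scope.

(* Linear codes over a finite field F (q = #|F|, automatically a prime power).
   An [n,k]_F code is represented by a generator matrix G : 'M[F]_(k,n) of
   full row rank k; the code is the row space of G. *)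

Section Codes.
Variable F : finFieldType.

Definition hwt n (c : 'rV[F]_n) : nat := #|[set i : 'I_n | c 0 i != 0]|.

Definition codeword k n (G : 'M[F]_(k, n)) (c : 'rV[F]_n) : bool := (c <= G)%MS.

Definition is_code k n (G : 'M[F]_(k, n)) : Prop :=
  \rank G = k /\
  ((2 <= k)%N -> forall i : 'I_n, exists c : 'rV[F]_n, codeword G c /\ c 0 i != 0).

Definition nz_weights k n (G : 'M[F]_(k, n)) : seq nat :=
  undup [seq hwt c | c <- enum [pred c : 'rV[F]_n | codeword G c && (c != 0)]].

Definition MWS k n (G : 'M[F]_(k, n)) : Prop :=
  is_code G /\ size (nz_weights G) = ((#|F| ^ k - 1) %/ (#|F| - 1))%N.
End Codes.

(* Stack size R + 1 copies of the nonzero columns of G under a zero row, next to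
   the columns of a multiset R of vectors of F^k under a row of ones. The message
   (s, y) then has weight wt(yG) (|R| + 1) + #{v in R | s + y.v != 0}, the second
   term being at most |R|. If R is separating (for y != 0 the fibre sizes
   #{v in R | y.v = c} of the c in F are pairwise distinct), the q |W| pairs of a
   weight w of G and a scalar s give distinct weights, and with |R| (from y = 0)
   this makes q |W| + 1 = (q^(k+1) - 1)/(q - 1) weights, the maximum, because the
   q - 1 nonzero multiples of a codeword share its weight. A separating multiset
   of size < q^(k+1) is built recursively: the vectors (a; v) with v arbitrary,
   the scalars a taken with pairwise distinct multiplicities, largest for a = 0,
   plus (0; R') for a separating multiset R' of F^(k-1). *)

From HB Require Import structures.
From mathcomp Require Import all_boot all_order all_algebra all_field.
From mathcomp Require Import zify.
Set Implicit Arguments. Unset Strict Implicit. Unset Printing Implicit Defensive.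
Import GRing.Theory.
Local Open Scope ring_scope.

Lemma count_enum (T : finType) (P : pred T) : count P (enum T) = #|[set x | P x]|.
Proof. by rewrite cardsE -size_filter enumT cardE /enum_mem. Qed.

Lemma sum_nat_bool (T : Type) (P : pred T) (s : seq T) : (\sum_(x <- s) P x)%N = count P s.
Proof. by rewrite -sumn_count sumnE big_map. Qed.

Lemma geom_quotS b m : (1 < b)%N ->
  ((b ^ m.+1 - 1) %/ (b - 1) = b * ((b ^ m - 1) %/ (b - 1)) + 1)%N.
Proof.
move=> b_gt1; have b1_gt0 : (0 < b.-1)%N by rewrite -subn1 subn_gt0.
rewrite !subn1 !predn_exp !mulKn // big_ord_recl expn0 addnC big_distrr /=.
by congr (_ + _)%N; apply: eq_bigr => i _; rewrite expnS.
Qed.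

Section Weights.
Variable F : finFieldType.
Local Notation q := #|F|.

Lemma hwt_eq0 n (c : 'rV[F]_n) : (hwt c == 0)%N = (c == 0).
Proof.
rewrite cards_eq0; apply/eqP/eqP => [/setP c0 | ->]; last first.
  by apply/setP => i; rewrite !inE mxE eqxx.
by apply/rowP => i; have := c0 i; rewrite !inE mxE => /negbFE/eqP.
Qed.

Lemma hwt0 n : hwt (0 : 'rV[F]_n) = 0%N.
Proof. by apply/eqP; rewrite hwt_eq0. Qed.

Lemma hwtZ n (a : F) (c : 'rV[F]_n) : a != 0 -> hwt (a *: c) = hwt c.
Proof.
by move=> a0; apply: eq_card => i; rewrite !inE mxE mulf_eq0 (negbTE a0).
Qed.

Lemma nz_weightsP m n (G : 'M[F]_(m, n)) w :
  reflect (exists2 x : 'rV_m, x *m G != 0 & hwt (x *m G) = w) (w \in nz_weights G).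
Proof.
rewrite mem_undup; apply: (iffP mapP) => [[c] | [x xG0 <-]].
  by rewrite mem_enum => /andP[/submxP[x ->] cG0] ->; exists x.
by exists (x *m G); rewrite // mem_enum inE /= xG0 andbT /codeword submxMl.
Qed.

Definition weight_rep m n (G : 'M[F]_(m, n)) w : 'rV[F]_m :=
  odflt 0 [pick x | (x *m G != 0) && (hwt (x *m G) == w)].

Lemma weight_repP m n (G : 'M[F]_(m, n)) w : w \in nz_weights G ->
  weight_rep G w *m G != 0 /\ hwt (weight_rep G w *m G) = w.
Proof.
case/nz_weightsP=> x xG0 xw; rewrite /weight_rep.
case: pickP => [y /andP[-> /eqP] // | /(_ x)]; by rewrite xG0 xw eqxx.
Qed.

Lemma weight_rep_neq0 m n (G : 'M[F]_(m, n)) w : w \in nz_weights G -> weight_rep G w != 0.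
Proof. by case/weight_repP=> repG0 _; apply: contraNneq repG0 => ->; rewrite mul0mx. Qed.

Lemma nz_weights_le m n (G : 'M[F]_(m, n)) :
  (size (nz_weights G) * (q - 1) <= q ^ m - 1)%N.
Proof.
pose L := [seq a *: weight_rep G w | w <- nz_weights G, a <- enum [set~ (0 : F)]].
have L_uniq : uniq L.
  apply: allpairs_uniq => [||[w1 a1] [w2 a2]]; rewrite ?undup_uniq ?enum_uniq //.
  move=> /allpairsP[[w1' a1'] /= [w1W]]; rewrite mem_enum !inE => a1_0 [-> ->].
  move=> /allpairsP[[w2' a2'] /= [w2W]]; rewrite mem_enum !inE => a2_0 [-> ->] eq_a.
  have eq_w : w1' = w2'.
    have := congr1 (fun x => hwt (x *m G)) eq_a.
    by rewrite /= -!scalemxAl !hwtZ // (weight_repP w1W).2 (weight_repP w2W).2.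
  move: eq_a; rewrite {}eq_w => /eqP; rewrite -subr_eq0 -scalerBl scaler_eq0.
  by rewrite (negbTE (weight_rep_neq0 w2W)) orbF subr_eq0 => /eqP ->.
have L_nz : {subset L <= enum [set~ (0 : 'rV[F]_m)]}.
  move=> v /allpairsP[[w a] /= [wW]]; rewrite !mem_enum !inE => a0 ->.
  by rewrite scaler_eq0 negb_or a0 weight_rep_neq0.
have := uniq_leq_size L_uniq L_nz.
by rewrite size_allpairs -!cardE !cardsC1 card_mx mul1n !subn1.
Qed.

End Weights.

Section Columns.
Variable F : finFieldType.

Definition dot k (x : 'rV[F]_k) (v : 'cV[F]_k) : F := (x *m v) 0 0.

Lemma dot0l k (v : 'cV[F]_k) : dot 0 v = 0.
Proof. by rewrite /dot mul0mx mxE. Qed.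

Lemma dot0r k (x : 'rV[F]_k) : dot x 0 = 0.
Proof. by rewrite /dot mulmx0 mxE. Qed.

Lemma dot_row_col k (a : 'rV[F]_1) (y : 'rV[F]_k) (b : 'cV[F]_1) (v : 'cV[F]_k) :
  dot (row_mx a y) (col_mx b v) = a 0 0 * b 0 0 + dot y v.
Proof. by rewrite /dot mul_row_col mxE [(a *m b) 0 0]mxE big_ord1. Qed.

Definition cols k n (M : 'M[F]_(k, n)) : seq 'cV[F]_k := [seq col j M | j <- enum 'I_n].

Definition nzcols k n (M : 'M[F]_(k, n)) : seq 'cV[F]_k := [seq v <- cols M | v != 0].

Definition mxcols k (s : seq 'cV[F]_k) : 'M[F]_(k, size s) :=
  \matrix_(i, j) (nth 0 s j) i 0.

Lemma hwt_mulmx_cols k n (M : 'M[F]_(k, n)) x :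
  hwt (x *m M) = count (fun v => dot x v != 0) (cols M).
Proof.
rewrite count_map count_enum; apply: eq_card => j.
by rewrite !inE /dot colE mulmxA -colE [col _ _ _ _]mxE.
Qed.

Lemma hwt_mulmx_nzcols k n (M : 'M[F]_(k, n)) x :
  hwt (x *m M) = count (fun v => dot x v != 0) (nzcols M).
Proof.
rewrite hwt_mulmx_cols count_filter; apply: eq_count => v /=.
by case: (v =P 0) => [->|_] /=; rewrite ?dot0r ?eqxx ?andbT.
Qed.

Lemma cols_mxcols k (s : seq 'cV[F]_k) : cols (mxcols s) = s.
Proof.
rewrite -[RHS](map_tnth_enum (in_tuple s)); apply: eq_map => j.
by apply/colP => i; rewrite !mxE (tnth_nth 0).
Qed.

Lemma mxcols_nondegenerate k (s : seq 'cV[F]_k) : all (fun v => v != 0) s ->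
  forall j, exists c, codeword (mxcols s) c /\ c 0 j != 0.
Proof.
move=> /(all_nthP 0) s_nz j; have /s_nz /cV0Pn [i sji] : (j < size s)%N by [].
exists (row i (mxcols s)).
by split; rewrite ?/codeword ?row_sub // !mxE.
Qed.

Lemma row_mx_scalar_split k (x : 'rV[F]_(1 + k)) : exists s y, x = row_mx s%:M y.
Proof. by exists (lsubmx x 0 0), (rsubmx x); rewrite -mx11_scalar hsubmxK. Qed.

Lemma count_dot_eq_const k (y : 'rV[F]_k) (d d' : F) : y != 0 ->
  count (fun v => dot y v == d) (enum 'cV[F]_k) =
  count (fun v => dot y v == d') (enum 'cV[F]_k).
Proof.
case/rV0Pn=> i yi0; rewrite !count_enum.
pose v0 := ((d - d') / y 0 i) *: delta_mx i (0 : 'I_1).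
have dot_shift v : dot y (v + v0) = dot y v + (d - d').
  by rewrite /dot mulmxDr -scalemxAr mxE [in X in _ + X]mxE -colE [col _ _ _ _]mxE divfK.
rewrite -(card_preimset [set v | dot y v == d] (addIr v0)).
by apply: eq_card => v; rewrite !inE dot_shift (can2_eq (addrK _) (subrK _)) opprB subrKC.
Qed.

End Columns.

Section Separating.
Variable F : finFieldType.
Local Notation q := #|F|.
Let q_gt1 : (1 < q)%N := card_finNzRing_gt1 F.

Definition separating k (s : seq 'cV[F]_k) : Prop :=
  forall x : 'rV_k, x != 0 -> injective (fun c => count (fun v => dot x v == c) s).

(* [0] is not in the list, so its index [scalar_mult 0] is q - 1, larger than all
   the other values. *)
Definition scalar_mult (a : F) : nat := index a [seq b <- enum F | b != 0].

Definition scalar_multiset : seq F := flatten [seq nseq (scalar_mult a) a | a <- enum F].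

Fixpoint sep_cols k : seq 'cV[F]_k :=
  if k is k'.+1 then
    [seq col_mx a%:M v | a <- scalar_multiset, v <- enum 'cV[F]_k'] ++
    [seq col_mx 0 u | u <- sep_cols k']
  else [::].

Lemma size_nz_scalars : size [seq b <- enum F | b != 0] = q.-1.
Proof. by rewrite size_filter count_enum -(cardsC1 (0 : F)); apply: eq_card => b; rewrite !inE. Qed.

Lemma scalar_mult0 : scalar_mult 0 = q.-1.
Proof. by rewrite /scalar_mult memNindex ?size_nz_scalars // mem_filter eqxx. Qed.

Lemma scalar_mult_lt a : a != 0 -> (scalar_mult a < q.-1)%N.
Proof. by move=> a0; rewrite -size_nz_scalars index_mem mem_filter a0 mem_enum. Qed.

Lemma scalar_mult_inj : injective scalar_mult.
Proof.
move=> a b; have [->|a0] := eqVneq a 0; have [->|b0] := eqVneq b 0 => // eq_ab.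
- by move: (scalar_mult_lt b0); rewrite -eq_ab scalar_mult0 ltnn.
- by move: (scalar_mult_lt a0); rewrite eq_ab scalar_mult0 ltnn.
by apply: (index_inj 0) eq_ab; rewrite mem_filter mem_enum andbT.
Qed.

Lemma count_mem_scalar_multiset a : count_mem a scalar_multiset = scalar_mult a.
Proof.
rewrite count_flatten sumnE !big_map -enumT (bigD1_seq a) ?mem_enum ?enum_uniq //=.
rewrite count_nseq /= eqxx mul1n big1_seq ?addn0 // => b /andP[ba _].
by rewrite count_nseq /=; case: eqP ba => // ->; rewrite eqxx.
Qed.

Lemma size_scalar_multiset : size scalar_multiset = (\sum_(a <- enum F) scalar_mult a)%N.
Proof.
rewrite size_flatten /shape -map_comp sumnE big_map.
by apply: eq_bigr => a; rewrite /= size_nseq.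
Qed.

Lemma size_scalar_multiset_gt0 : (0 < size scalar_multiset)%N.
Proof.
rewrite size_scalar_multiset (bigD1_seq 0) ?mem_enum ?enum_uniq //= scalar_mult0.
by rewrite (leq_trans _ (leq_addr _ _)) // -subn1 subn_gt0 q_gt1.
Qed.

Lemma size_scalar_multiset_le : (size scalar_multiset <= q * q.-1)%N.
Proof.
rewrite size_scalar_multiset big_enum /= -sum_nat_const leq_sum // => a _.
by rewrite /scalar_mult -size_nz_scalars index_size.
Qed.

Lemma size_sep_colsS k :
  size (sep_cols k.+1) = (size scalar_multiset * q ^ k + size (sep_cols k))%N.
Proof. by rewrite /= size_cat size_allpairs size_map -enumT -cardT card_mx muln1 size_map. Qed.

Lemma size_sep_cols k : (size (sep_cols k) + q <= q ^ k.+1)%N.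
Proof.
elim: k => [|k IHk]; first by rewrite expn1.
have -> : (q ^ k.+2 = q.-1 * q ^ k.+1 + q ^ k.+1)%N.
  by rewrite -mulSnr prednK ?expnS // (ltnW q_gt1).
rewrite size_sep_colsS -addnA leq_add // expnS mulnA [(q.-1 * q)%N]mulnC.
by rewrite leq_mul2r size_scalar_multiset_le orbT.
Qed.

Lemma size_sep_cols_gt0 k : (0 < size (sep_cols k.+1))%N.
Proof.
rewrite size_sep_colsS (leq_trans _ (leq_addr _ _)) // muln_gt0.
by rewrite size_scalar_multiset_gt0 expn_gt0 (ltnW q_gt1).
Qed.

Lemma count_sep_colsS k (s : F) (y : 'rV[F]_k) c :
  count (fun v => dot (row_mx s%:M y) v == c) (sep_cols k.+1) =
  (\sum_(b <- scalar_multiset) count (fun v => (s * b + dot y v == c)%R) (enum 'cV[F]_k)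
   + count (fun v => dot y v == c) (sep_cols k))%N.
Proof.
rewrite count_cat count_flatten sumnE !big_map count_map; congr (_ + _)%N.
  apply: eq_bigr => b _; rewrite count_map; apply: eq_count => v.
  by rewrite /= dot_row_col !mxE eqxx !mulr1n.
by apply: eq_count => u; rewrite /= dot_row_col !mxE mulr0 add0r.
Qed.

Lemma count_sep_cols_row0 k (s c : F) : s != 0 ->
  count (fun v => dot (row_mx s%:M 0) v == c) (sep_cols k.+1) =
  (scalar_mult (c / s) * q ^ k + (c == 0)%R * size (sep_cols k))%N.
Proof.
move=> s0; rewrite count_sep_colsS; congr (_ + _)%N; last first.
  rewrite -(eq_count (a1 := fun=> c == 0)) => [|v]; last by rewrite dot0l eq_sym.
  by case: (c == 0); rewrite ?count_pred0 ?count_predT ?mul1n.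
rewrite -count_mem_scalar_multiset -sum_nat_bool big_distrl /=.
apply: eq_bigr => b _; rewrite -(eq_count (a1 := fun=> b == c / s)) => [|v]; last first.
  by rewrite dot0l addr0; apply/eqP/eqP => [->|<-]; rewrite mulrC ?divfK ?mulKf.
by case: (b == _); rewrite ?count_pred0 // count_predT -cardT card_mx muln1 mul1n.
Qed.

Lemma sep_cols_row0_inj k (s : F) : s != 0 ->
  injective (fun c => count (fun v => dot (row_mx s%:M 0) v == c) (sep_cols k.+1)).
Proof.
move=> s0 c1 c2 /=; rewrite !count_sep_cols_row0 //.
have qk_gt0 : (0 < q ^ k)%N by rewrite expn_gt0 (ltnW q_gt1).
have lt_mult c : c != 0 -> (scalar_mult (c / s) * q ^ k < q.-1 * q ^ k)%N.
  by move=> c0; rewrite ltn_pmul2r // scalar_mult_lt // mulf_neq0 ?invr_neq0.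
have [->|c1_0] := eqVneq c1 0; have [->|c2_0] := eqVneq c2 0 => //.
- rewrite mul0r scalar_mult0 mul1n mul0n addn0 => eq_c.
  by have := lt_mult _ c2_0; rewrite -eq_c ltnNge leq_addr.
- rewrite mul0r scalar_mult0 mul1n mul0n addn0 => eq_c.
  by have := lt_mult _ c1_0; rewrite eq_c ltnNge leq_addr.
rewrite !mul0n !addn0 => /eqP; rewrite eqn_pmul2r // => /eqP/scalar_mult_inj.
exact: (mulIf (invr_neq0 s0)).
Qed.

Lemma sep_cols_separating k : separating (sep_cols k).
Proof.
elim: k => [x|k IHk x]; first by rewrite [x]thinmx0 eqxx.
have [s [y ->]] := row_mx_scalar_split x; have [-> x0|y0 _] := eqVneq y 0.
  by apply: sep_cols_row0_inj; apply: contraNneq x0 => ->; rewrite raddf0 row_mx0.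
(* For y != 0 the first block contributes the same amount for every c: each b
   counts the v with y.v = c - s b, and all fibres of v |-> y.v have equal size. *)
move=> c1 c2 /=; rewrite !count_sep_colsS.
have count_const c : (\sum_(b <- scalar_multiset)
    count (fun v => (s * b + dot y v == c)%R) (enum 'cV[F]_k) =
  \sum_(b <- scalar_multiset) count (fun v => (dot y v == 0)%R) (enum 'cV[F]_k))%N.
  apply: eq_bigr => b _; rewrite (count_dot_eq_const 0 (c - s * b) y0).
  by apply: eq_count => v; rewrite /= [RHS]eq_sym subr_eq addrC eq_sym.
by rewrite !count_const => /addnI; apply: IHk.
Qed.

End Separating.

Section Extension.
Variables (F : finFieldType) (k n : nat) (G : 'M[F]_(k, n)) (R : seq 'cV[F]_k).
Local Notation q := #|F|.
Let q_gt1 : (1 < q)%N := card_finNzRing_gt1 F.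

Definition ext_cols : seq 'cV[F]_(1 + k) :=
  flatten (nseq (size R).+1 [seq col_mx 0 v | v <- nzcols G]) ++ [seq col_mx 1 v | v <- R].

Definition ext_mx := mxcols ext_cols.

Lemma size_ext_cols : size ext_cols = ((size R).+1 * size (nzcols G) + size R)%N.
Proof. by rewrite size_cat size_flatten /shape map_nseq sumn_nseq !size_map mulnC. Qed.

Lemma hwt_ext (s : F) (y : 'rV[F]_k) :
  hwt (row_mx s%:M y *m ext_mx) =
  (hwt (y *m G) * (size R).+1 + count (fun v => (s + dot y v != 0)%R) R)%N.
Proof.
rewrite hwt_mulmx_cols cols_mxcols count_cat count_flatten map_nseq sumn_nseq !count_map.
rewrite hwt_mulmx_nzcols; congr (_ * _ + _)%N; apply: eq_count => v /=.
  by rewrite dot_row_col !mxE mulr0 add0r.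
by rewrite dot_row_col !mxE eqxx !mulr1n mulr1.
Qed.

Lemma ext_mx_nondegenerate j : exists c, codeword ext_mx c /\ c 0 j != 0.
Proof.
apply: mxcols_nondegenerate; rewrite all_cat; apply/andP; split; apply/allP => v.
  rewrite -mem_undup undup_flatten_nseq // mem_undup => /mapP[u].
  by rewrite mem_filter => /andP[u0 _] ->; rewrite col_mx_eq0 negb_and u0 orbT.
by case/mapP=> u _ ->; rewrite col_mx_eq0 negb_and oner_neq0.
Qed.

Lemma hwt_ext_gt0 (s : F) (y : 'rV[F]_k) : row_free G -> (0 < size R)%N ->
  row_mx s%:M y != 0 -> (0 < hwt (row_mx s%:M y *m ext_mx))%N.
Proof.
move=> freeG R_gt0 sy0; rewrite hwt_ext; have [y0|y_nz] := eqVneq y 0.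
  have s0 : s != 0 by apply: contraNneq sy0 => s0; rewrite s0 y0 raddf0 row_mx0.
  rewrite (leq_trans R_gt0) // -count_predT (leq_trans _ (leq_addl _ _)) //.
  by rewrite (eq_count (a2 := predT)) // => v; rewrite y0 dot0l addr0.
by rewrite (leq_trans _ (leq_addr _ _)) // muln_gt0 lt0n hwt_eq0 mulmx_free_eq0 ?y_nz.
Qed.

Lemma row_free_ext : row_free G -> (0 < size R)%N -> row_free ext_mx.
Proof.
move=> freeG R_gt0; apply: inj_row_free => x; have [s [y ->]] := row_mx_scalar_split x.
move=> /eqP; rewrite -hwt_eq0 => /eqP hwt0; apply/eqP; apply: contraT => sy0.
by have := hwt_ext_gt0 freeG R_gt0 sy0; rewrite hwt0.
Qed.

Lemma separating_shift (y : 'rV[F]_k) : separating R -> y != 0 ->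
  injective (fun s => count (fun v => (s + dot y v != 0)%R) R).
Proof.
move=> sepR y0 s1 s2 /= eq_s; apply: oppr_inj; apply: (sepR y y0) => /=.
have count_eq s : count (fun v => dot y v == - s) R =
    (size R - count (fun v => (s + dot y v != 0)%R) R)%N.
  rewrite -(count_predC (fun v => dot y v == - s)).
  rewrite (@eq_count _ (predC _) (fun v => (s + dot y v != 0)%R)) ?addnK // => v.
  by rewrite /= addrC addr_eq0.
by rewrite !count_eq eq_s.
Qed.

Lemma nz_weights_ext_ge : row_free G -> separating R -> (0 < size R)%N ->
  ((q * size (nz_weights G)).+1 <= size (nz_weights ext_mx))%N.
Proof.
move=> freeG sepR R_gt0; set W := nz_weights G; set A := (size R).+1.
pose g w s := count (fun v => (s + dot (weight_rep G w) v != 0)%R) R.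
have g_lt w s : (g w s < A)%N by rewrite ltnS count_size.
have w_gt0 w : w \in W -> (0 < w)%N.
  by case/weight_repP=> repG0 <-; rewrite lt0n hwt_eq0.
have hwt_rep w s : w \in W -> hwt (row_mx s%:M (weight_rep G w) *m ext_mx) = (w * A + g w s)%N.
  by move=> /weight_repP[_ rep_w]; rewrite hwt_ext rep_w.
pose L := [seq (w * A + g w s)%N | w <- W, s <- enum F] ++ [:: size R].
have L_sub : {subset L <= nz_weights ext_mx}.
  move=> z; rewrite mem_cat mem_seq1 => /orP[/allpairsP[[w s] /= [wW _ ->]] | /eqP->].
    apply/nz_weightsP; exists (row_mx s%:M (weight_rep G w)); rewrite ?hwt_rep //.
    by rewrite -hwt_eq0 hwt_rep // -lt0n (leq_trans _ (leq_addr _ _)) // muln_gt0 w_gt0.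
  apply/nz_weightsP; exists (row_mx 1%:M 0).
    by rewrite -hwt_eq0 -lt0n hwt_ext_gt0 // row_mx_eq0 negb_and oner_neq0.
  rewrite hwt_ext mul0mx hwt0 add0n -[RHS]count_predT; apply: eq_count => v.
  by rewrite dot0l addr0 oner_neq0.
have L_uniq : uniq L.
  rewrite cat_uniq /= andbT; apply/andP; split.
    apply: allpairs_uniq => [||[w1 s1] [w2 s2]]; rewrite ?undup_uniq ?enum_uniq //.
    move=> /allpairsP[[w1' s1'] /= [w1W _ [-> ->]]] /allpairsP[[w2' s2'] /= [w2W _ [-> ->]]].
    move=> /(congr1 (edivn^~ A)); rewrite !edivn_eq // => -[eq_w]; rewrite -{}eq_w in w2W *.
    by move/(separating_shift sepR (weight_rep_neq0 w1W)) ->.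
  rewrite orbF; apply/negP => /allpairsP[[w s] /= [wW _ eq_R]].
  by move: (w_gt0 _ wW) eq_R; rewrite /A; nia.
by have := uniq_leq_size L_uniq L_sub; rewrite size_cat size_allpairs -cardE addn1 mulnC.
Qed.

Lemma MWS_ext : MWS G -> separating R -> (0 < size R)%N -> MWS ext_mx.
Proof.
move=> [[rankG _] nzwG] sepR R_gt0; have freeG : row_free G by rewrite /row_free rankG.
have q1_gt0 : (0 < q - 1)%N by rewrite subn_gt0 q_gt1.
split; first split.
- exact/eqP/row_free_ext.
- by move=> _; apply: ext_mx_nondegenerate.
apply/eqP; rewrite eqn_leq leq_divRL // nz_weights_le /=.
by rewrite [X in (q ^ X - 1)%N]add1n geom_quotS ?q_gt1 // -nzwG addn1 nz_weights_ext_ge.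
Qed.

Lemma size_ext_cols_lt t : (n < q ^ t)%N -> (size R < q ^ k.+1)%N ->
  (size ext_cols < q ^ (t + k + 1))%N.
Proof.
have : (size (nzcols G) <= n)%N.
  by rewrite size_filter (leq_trans (count_size _ _)) // size_map size_enum_ord.
rewrite size_ext_cols -addnA addn1 expnD; nia.
Qed.

End Extension.

Theorem mainTheorem15 (F : finFieldType) (k t : nat) :
  (1 <= k)%N ->
  (exists (n : nat) (G : 'M[F]_(k, n)), (n < #|F| ^ t)%N /\ MWS G) ->
  exists (N : nat) (G' : 'M[F]_(k.+1, N)), (N < #|F| ^ (t + k + 1))%N /\ MWS G'.
Proof.
case: k => [//|k] _ [n [G [n_lt mwsG]]].
pose R := sep_cols F k.+1.
have R_lt : (size R < #|F| ^ k.+2)%N.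
  apply: leq_trans (size_sep_cols F k.+1); rewrite -[X in (X < _)%N]addn0 ltn_add2l.
  exact: ltnW (card_finNzRing_gt1 F).
exists (size (ext_cols G R)), (ext_mx G R); split.
  exact: size_ext_cols_lt n_lt R_lt.
exact: MWS_ext mwsG (@sep_cols_separating F k.+1) (size_sep_cols_gt0 F k).
Qed.
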